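(* Let $n\in\mathbb{N}\cup\{\infty\}$ and let $\{J(t)\}_{t\ge0}$ be a stochastic process on the (possibly infinite) countable state space $\{1,2,\dots,n\}$. Suppose its distribution $\mathbf{r}(t)=(\mathbf{r}_i(t))_{i=1}^n=(\mathbb{P}(J(t)=i))_{i=1}^n\in\mathbb{R}^n$ satisfies $$\frac{d}{dt}\mathbf{r}(t)=R(t)\mathbf{r}(t),\quad t>0,$$ for some function $R(t):[0,\infty)\to\mathbb{R}^{n\times n}$, and $\mathbf{r}(t)=\Psi(t)\mathbf{r}(0)$ for $t\ge0$, where $\Psi(t):(-\infty,\infty)\to\mathbb{R}^{n\times n}$ satisfies $\Psi(t)\Psi(-t)=\mathrm{id}$ (the identity operator) for all $t\in(-\infty,\infty)$. Let $\{X(t)\}_{t\ge0}$ be a stochastic process taking values in the closure of an open set $V\subseteq\mathbb{R}^d$, whose probability density $q(x,t)\,dx=\mathbb{P}(X(t)=x)$ satisfies $$\frac{\partial}{\partial t}q=\mathcal{D}_t\mathcal{L}_x q,\quad x\in V,\ t>0,$$ where $\mathcal{L}_x$ is a linear operator acting only on functions of space $x\in V$ and $\mathcal{D}_t$ is a linear operator acting only on functions of time $t\in[0,\infty)$, in the sense that for real-valued functions $\varphi(t),\psi(t)$ in the domain of $\mathcal{D}_t$ and $f(x),g(x)$ in the domain of $\mathcal{L}_x$, $$\mathcal{L}_x(\varphi f+\psi g)=\varphi\,\mathcal{L}_x f+\psi\,\mathcal{L}_x g,\qquad \mathcal{D}_t(\varphi f+\psi g)=f\,\mathcal{D}_t\varphi+g\,\mathcal{D}_t\psi.$$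 If $X$ and $J$ are independent, then the joint probability density $\mathbf{p}(x,t)=(\mathbf{p}_i(x,t))_{i=1}^n$, defined by $\mathbf{p}_i(x,t)\,dx=\mathbb{P}(X(t)=x,\,J(t)=i)$, satisfies $$\frac{\partial}{\partial t}\mathbf{p}=\Psi(t)\,\mathcal{D}_t\Big[\Psi(-t)\,\mathcal{L}_x\mathbf{p}\Big]+R(t)\,\mathbf{p},\quad x\in V,\ t>0.$$
   Context: Motivating example: for subdiffusion one takes $\mathcal{D}_t={}_{0}D_{t}^{1-\alpha}$, the Riemann-Liouville fractional derivative ${}_{0}D_{t}^{1-\alpha}f(t)=\frac{1}{\Gamma(\alpha)}\frac{d}{dt}\int_0^t\frac{f(s)}{(t-s)^{1-\alpha}}\,ds$ with $\alpha\in(0,1)$, and $\mathcal{L}_x$ a (forward) Fokker-Planck operator such as $K_\alpha\frac{\partial^2}{\partial x^2}$; with constant $R$ and finite $n$, $\Psi(t)=e^{Rt}$ (matrix exponential). *)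

From HB Require Import structures.
From mathcomp Require Import all_boot all_order all_algebra.
From mathcomp Require Import all_classical all_reals all_analysis.
Set Implicit Arguments. Unset Strict Implicit. Unset Printing Implicit Defensive.
Import Order.TTheory GRing.Theory Num.Theory.
Import numFieldNormedType.Exports.
Local Open Scope ring_scope.
Local Open Scope classical_set_scope.

(* D_t : a (partially defined) linear operator on real functions of time,
   with domain domD:  D(a phi + b psi) = a D phi + b D psi  (the coefficients
   a, b play the role of the x-dependent factors f(x), g(x), x being fixed). *)
Definition time_op_linear (R : realType) (domD : set (R -> R))
    (D : (R -> R) -> (R -> R)) : Prop :=
  forall (phi psi : R -> R) (a b : R), domD phi -> domD psi ->
    domD (fun t => a * phi t + b * psi t) /\
    D (fun t => a * phi t + b * psi t) = (fun t => a * D phi t + b * D psi t).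

(* D_t acts on functions of time t in [0, oo): it only sees their values on
   [0, oo) (and its output is used on (0, oo)). *)
Definition time_op_on_halfline (R : realType) (domD : set (R -> R))
    (D : (R -> R) -> (R -> R)) : Prop :=
  forall phi psi : R -> R, domD phi -> (forall s, 0 <= s -> psi s = phi s) ->
    domD psi /\ (forall t, 0 < t -> D psi t = D phi t).

Definition space_op_linear (R : realType) (T : Type) (domL : set (T -> R))
    (L : (T -> R) -> (T -> R)) : Prop :=
  forall (f g : T -> R) (a b : R), domL f -> domL g ->
    domL (fun x => a * f x + b * g x) /\
    L (fun x => a * f x + b * g x) = (fun x => a * L f x + b * L g x).

(* A linear operator on vectors indexed by the state space I
   (for finite I this is exactly an n x n matrix). *)
Definition linop (R : realType) (I : Type) (A : (I -> R) -> (I -> R)) : Prop :=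
  forall (a b : R) (u v : I -> R),
    A (fun i => a * u i + b * v i) = (fun i => a * A u i + b * A v i).

Definition indep_joint_density (R : realType) (T I : Type)
    (q : T -> R -> R) (r : R -> I -> R) (p : I -> T -> R -> R) : Prop :=
  forall i x t, 0 <= t -> p i x t = q x t * r t i.

From HB Require Import structures.
From mathcomp Require Import all_boot all_order all_algebra.
From mathcomp Require Import all_classical all_reals all_analysis.
Set Implicit Arguments. Unset Strict Implicit. Unset Printing Implicit Defensive.
Import Order.TTheory GRing.Theory Num.Theory.
Import numFieldNormedType.Exports.
Local Open Scope ring_scope.
Local Open Scope classical_set_scope.

(* By independence p_k(x,s) = r_k(s) q(x,s), so L_x only acts on q and
   Psi(-s) only acts on r(s) = Psi(s) r(0), which it sends back to the
   constant vector r(0).  Hence Psi(-s) L_x p = r(0) (L_x q)(s), D_t acts on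
   the scalar factor alone, and Psi(t) turns r(0) into r(t) again:
   Psi(t) D_t [Psi(-t) L_x p] = r(t) D_t L_x q = r(t) dq/dt.  The product rule
   for d/dt (q r_i) then gives the missing term q (R r)_i = (R p)_i. *)

Lemma linopZ {R : realType} {I : Type} {A : (I -> R) -> (I -> R)}
    (a : R) (u : I -> R) :
  linop A -> A (fun i => a * u i) = (fun i => a * A u i).
Proof.
move=> hA; have := hA a 0 u u.
under [in X in X = _ -> _]eq_fun do rewrite mul0r addr0.
by move=> ->; apply: funext => i; rewrite mul0r addr0.
Qed.

Lemma space_op_linearZ {R : realType} {T : Type} {dom : set (T -> R)}
    {L : (T -> R) -> (T -> R)} (a : R) {f : T -> R} :
  space_op_linear dom L -> dom f ->
  dom (fun y => a * f y) /\ L (fun y => a * f y) = (fun y => a * L f y).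
Proof.
move=> hL hf; have [] := hL f f a 0 hf hf.
under eq_fun do rewrite mul0r addr0.
by move=> ? ->; split=> //; apply: funext => y; rewrite mul0r addr0.
Qed.

Lemma time_op_linearZ {R : realType} {dom : set (R -> R)}
    {D : (R -> R) -> (R -> R)} (a : R) {phi : R -> R} :
  time_op_linear dom D -> dom phi ->
  dom (fun s => a * phi s) /\ D (fun s => a * phi s) = (fun s => a * D phi s).
Proof. exact: space_op_linearZ. Qed.

Section IndependentJointDensity.

Variables (R : realType) (T I : Type).
Variables (Psi Rm : R -> (I -> R) -> (I -> R)) (r : R -> I -> R).
Variables (q : T -> R -> R) (p : I -> T -> R -> R).
Variables (domL : set (T -> R)) (L : (T -> R) -> (T -> R)).
Variables (domD : set (R -> R)) (D : (R -> R) -> (R -> R)).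

Hypothesis Psi_linop : forall t, linop (Psi t).
Hypothesis Rm_linop : forall t, 0 <= t -> linop (Rm t).
Hypothesis PsiK : forall t u, Psi t (Psi (- t) u) = u.
Hypothesis r_Psi : forall t, 0 <= t -> r t = Psi t (r 0).
Hypothesis L_linear : space_op_linear domL L.
Hypothesis D_linear : time_op_linear domD D.
Hypothesis D_halfline : time_op_on_halfline domD D.
Hypothesis q_domL : forall t, 0 <= t -> domL (fun y => q y t).
Hypothesis p_indep : indep_joint_density q r p.

Let Lq (x : T) (s : R) : R := L (fun y => q y s) x.

Lemma Psi_opp_state (s : R) : 0 <= s -> Psi (- s) (r s) = r 0.
Proof. by move=> s0; rewrite r_Psi //; have := PsiK (- s) (r 0); rewrite opprK. Qed.

Lemma joint_slice (k : I) (s : R) :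
  0 <= s -> (fun y => p k y s) = (fun y => r s k * q y s).
Proof. by move=> s0; apply: funext => y; rewrite p_indep // mulrC. Qed.

Lemma joint_slice_domL (k : I) (s : R) : 0 <= s -> domL (fun y => p k y s).
Proof.
move=> s0; rewrite joint_slice //.
by have [] := space_op_linearZ (r s k) L_linear (q_domL s0).
Qed.

Lemma L_joint_slice (k : I) (x : T) (s : R) :
  0 <= s -> L (fun y => p k y s) x = r s k * Lq x s.
Proof.
move=> s0; rewrite joint_slice //.
by have [_ ->] := space_op_linearZ (r s k) L_linear (q_domL s0).
Qed.

Lemma Psi_opp_L_joint (x : T) (j : I) (s : R) : 0 <= s ->
  Psi (- s) (fun k => L (fun y => p k y s) x) j = r 0 j * Lq x s.
Proof.
move=> s0; under eq_fun do rewrite L_joint_slice // mulrC.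
by rewrite linopZ // Psi_opp_state // mulrC.
Qed.

Section AtPoint.

Variable x : T.
Hypothesis Lq_domD : domD (Lq x).

Lemma Psi_opp_L_joint_domD (j : I) :
  domD (fun s => Psi (- s) (fun k => L (fun y => p k y s) x) j).
Proof.
have [dom_rLq _] := time_op_linearZ (r 0 j) D_linear Lq_domD.
by have [] := D_halfline dom_rLq (Psi_opp_L_joint x j).
Qed.

Lemma D_Psi_opp_L_joint (j : I) (t : R) : 0 < t ->
  D (fun s => Psi (- s) (fun k => L (fun y => p k y s) x) j) t = r 0 j * D (Lq x) t.
Proof.
move=> t0; have [dom_rLq D_rLq] := time_op_linearZ (r 0 j) D_linear Lq_domD.
have [_ ->] := D_halfline dom_rLq (Psi_opp_L_joint x j) => //.
by rewrite D_rLq.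
Qed.

Lemma Psi_D_Psi_opp_L_joint (i : I) (t : R) : 0 < t ->
  Psi t (fun j => D (fun s => Psi (- s) (fun k => L (fun y => p k y s) x) j) t) i
  = D (Lq x) t * r t i.
Proof.
move=> t0; under eq_fun do rewrite D_Psi_opp_L_joint // mulrC.
by rewrite linopZ // -r_Psi // ltW.
Qed.

End AtPoint.

Lemma Rm_joint (x : T) (i : I) (t : R) : 0 <= t ->
  Rm t (fun j => p j x t) i = q x t * Rm t (r t) i.
Proof.
move=> t0; under eq_fun do rewrite p_indep //.
by rewrite linopZ //; apply: Rm_linop.
Qed.

Lemma is_derive_joint (x : T) (i : I) (t : R) (dq dr : R) : 0 < t ->
  is_derive t (1 : R) (fun s => q x s) dq ->
  is_derive t (1 : R) (fun s => r s i) dr ->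
  is_derive t (1 : R) (fun s => p i x s) (dq * r t i + q x t * dr).
Proof.
move=> t0 hq hr.
have -> : dq * r t i + q x t * dr = q x t *: dr + r t i *: dq.
  by rewrite addrC [dq * _]mulrC.
apply: near_eq_is_derive (is_deriveM hq hr).
near=> s; rewrite /= p_indep //; apply: ltW; near: s; exact: lt_nbhsr.
Unshelve. all: by end_near.
Qed.

End IndependentJointDensity.

Theorem theorem1 (R : realType) (d : nat) (I : countType)
    (V : set 'rV[R]_d)
    (Psi : R -> (I -> R) -> (I -> R)) (Rm : R -> (I -> R) -> (I -> R))
    (r : R -> I -> R) (q : 'rV[R]_d -> R -> R) (p : I -> 'rV[R]_d -> R -> R)
    (domL : set ('rV[R]_d -> R)) (L : ('rV[R]_d -> R) -> ('rV[R]_d -> R))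
    (domD : set (R -> R)) (D : (R -> R) -> (R -> R)) :
  open V ->
  (forall t, linop (Psi t)) ->
  (forall t : R, 0 <= t -> linop (Rm t)) ->
  (forall t u, Psi t (Psi (- t) u) = u) ->
  (forall t : R, 0 <= t -> r t = Psi t (r 0)) ->
  (forall (t : R) (i : I), 0 < t -> is_derive t (1 : R) (fun s => r s i) (Rm t (r t) i)) ->
  space_op_linear domL L ->
  time_op_linear domD D ->
  time_op_on_halfline domD D ->
  (forall t : R, 0 <= t -> domL (fun y => q y t)) ->
  (forall x, V x -> domD (fun s => L (fun y => q y s) x)) ->
  (forall (x : 'rV[R]_d) (t : R), V x -> 0 < t ->
     is_derive t (1 : R) (fun s => q x s) (D (fun s => L (fun y => q y s) x) t)) ->
  indep_joint_density q r p ->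
  forall (x : 'rV[R]_d) (t : R), V x -> 0 < t -> forall i : I,
    (forall s : R, 0 <= s -> domL (fun y => p i y s)) /\
    domD (fun s => Psi (- s) (fun k => L (fun y => p k y s) x) i) /\
    is_derive t (1 : R) (fun s => p i x s)
      (Psi t (fun j => D (fun s => Psi (- s) (fun k => L (fun y => p k y s) x) j) t) i
       + Rm t (fun j => p j x t) i).
Proof.
move=> _ hPsi hRm hinv hr hrd hL hD hH hqL hqD hqd hp x t Vx t0 i.
split; first by move=> s; exact: (joint_slice_domL hL hqL hp).
split; first exact: (Psi_opp_L_joint_domD hPsi hinv hr hL hD hH hqL hp (hqD x Vx)).
rewrite (Psi_D_Psi_opp_L_joint hPsi hinv hr hL hD hH hqL hp (hqD x Vx)) //.
rewrite (Rm_joint hRm hp) ?ltW //.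
exact: (is_derive_joint hp t0 (hqd x t Vx t0) (hrd t i t0)).
Qed.
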